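(* Let $\mathcal{F}$ be the class of planar graphs of maximum degree at most $4$, and let $G \in \mathcal{F}$ be a graph with $\chi_2(G) > 12$ that minimizes the pair $(|V(G)|, |E(G)|)$ (lexicographically) among all graphs of $\mathcal{F}$ with $\chi_2 > 12$. Then $G$ is $2$-connected.
   Context: All graphs are finite, without loops or parallel edges. A distance-$2$ coloring of a graph is an assignment of colors to its vertices such that any two distinct vertices at distance at most $2$ receive different colors; $\chi_2(G)$ is the minimum number of colors in a distance-$2$ coloring of $G$. *)

From Stdlib Require Import Reals.
From mathcomp Require Import all_boot.
Set Implicit Arguments. Unset Strict Implicit. Unset Printing Implicit Defensive.

Definition simple_graph (T : finType) (e : rel T) : Prop :=
  symmetric e /\ irreflexive e.

Definition deg (T : finType) (e : rel T) (x : T) : nat := #|[set y | e x y]|.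
Definition max_deg_le (T : finType) (e : rel T) (d : nat) : Prop :=
  forall x, deg e x <= d.

Definition num_edges (T : finType) (e : rel T) : nat :=
  (#|[set p : T * T | e p.1 p.2]|)./2.

(* Distance-2 colouring with k colours: distinct vertices at distance <= 2
   get distinct colours. chi_2(G) <= k iff such a colouring exists. *)
Definition dist2_coloring (T : finType) (e : rel T) (k : nat) (f : T -> 'I_k) : Prop :=
  forall x y, x != y -> (e x y || [exists z, e x z && e z y]) -> f x != f y.
Definition dist2_colorable (T : finType) (e : rel T) (k : nat) : Prop :=
  exists f : T -> 'I_k, dist2_coloring e f.

(* Vertices go to distinct points,
   each edge {x,y} is drawn as a continuous injective arc from p x to p y
   (parametrised by [0,1]) whose interior avoids all vertex points, and arcs of
   distinct edges meet only at vertex points (hence at common endpoints). *)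
Definition in01 (t : R) : Prop := Rle R0 t /\ Rle t R1.
Definition in01o (t : R) : Prop := Rlt R0 t /\ Rlt t R1.

Definition planar (T : finType) (e : rel T) : Prop :=
  exists (p : T -> prod R R) (c : T -> T -> R -> prod R R),
    injective p /\
    (forall x y, e x y ->
       (forall t, continuity_pt (fun s => fst (c x y s)) t) /\
       (forall t, continuity_pt (fun s => snd (c x y s)) t) /\
       c x y R0 = p x /\ c x y R1 = p y /\
       (forall s t, in01 s -> in01 t -> c x y s = c x y t -> s = t) /\
       (forall z t, in01o t -> c x y t <> p z)) /\
    (forall x y u v, e x y -> e u v -> ~ ((x = u /\ y = v) \/ (x = v /\ y = u)) ->
       forall s t, in01 s -> in01 t -> c x y s = c u v t ->
       exists w, c x y s = p w).

Definition in_F (T : finType) (e : rel T) : Prop :=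
  simple_graph e /\ planar e /\ max_deg_le e 4.

Definition lex_le (T : finType) (e : rel T) (T' : finType) (e' : rel T') : Prop :=
  #|T| < #|T'| \/ (#|T| = #|T'| /\ num_edges e <= num_edges e').

Definition connected_graph (T : finType) (e : rel T) : Prop :=
  forall x y : T, connect e x y.
Definition two_connected (T : finType) (e : rel T) : Prop :=
  2 < #|T| /\ connected_graph e /\
  forall v x y : T, x != v -> y != v ->
    connect [rel a b | [&& e a b, a != v & b != v]] x y.

From Stdlib Require Import Reals Classical.
From mathcomp Require Import all_boot zify.
Set Implicit Arguments. Unset Strict Implicit. Unset Printing Implicit Defensive.

(* A minimal counterexample has more than 12 vertices, since distinct colours
   on all vertices form a distance-2 colouring.  Suppose v is a cut vertex and
   C is a component of G - v.  The subgraphs induced by C + v and by V - C are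
   smaller graphs of the class, hence have distance-2 12-colourings, and every
   constraint of G inside either part is already witnessed inside that part.
   The only constraints across the cut are between a neighbour of v in C and a
   neighbour of v outside C.  As v has at most 4 < 12 neighbours, the colours
   of the second colouring can be permuted so that v keeps its colour from the
   first one and the neighbours of v on the two sides receive disjoint sets of
   colours; gluing then colours G, a contradiction. *)

Lemma exists_inj_avoiding (K : finType) (a b : K) (S1 S2 : {set K}) :
  a \notin S2 -> b \notin S1 -> #|S1| + #|S2| < #|K| ->
  exists g : K -> K, [/\ injective g, g a = b & forall c, c \in S2 -> g c \notin S1].
Proof.
move=> aNS2 bNS1 card_lt.
(* g sends the i-th entry of P to the i-th entry of Q. *)
set P := a :: enum S2 ++ enum (~: (a |: S2)).
set Q := b :: enum (~: (b |: S1)) ++ enum S1.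
have memP c : c \in P by rewrite inE mem_cat !mem_enum !inE; case: eqP; case: (c \in S2).
have memQ c : c \in Q by rewrite inE mem_cat !mem_enum !inE; case: eqP; case: (c \in S1).
have uniqP : uniq P.
  rewrite /= mem_cat !mem_enum !inE eqxx (negbTE aNS2) cat_uniq !enum_uniq /= andbT.
  by apply/hasPn => c; rewrite !mem_enum !inE negb_or => /andP[].
have uniqQ : uniq Q.
  rewrite /= mem_cat !mem_enum !inE eqxx (negbTE bNS1) cat_uniq !enum_uniq /= andbT.
  by apply/hasPn => c; rewrite !mem_enum !inE negb_or => ->; rewrite andbF.
have sizeP : size P = #|K| by rewrite -(card_uniqP uniqP); apply: eq_card.
have sizeQ : size Q = #|K| by rewrite -(card_uniqP uniqQ); apply: eq_card.
exists (fun c => nth b Q (index c P)); split=> [c1 c2 /eqP| |c cS2].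
- rewrite nth_uniq // ?sizeQ -?sizeP ?index_mem // => /eqP eq_idx.
  by rewrite -(nth_index a (memP c1)) eq_idx nth_index.
- by rewrite /= eqxx.
have ca : a != c by apply: contraNneq aNS2 => ->.
rewrite /= (negbTE ca) index_cat mem_enum cS2 /=.
have idx_lt : index c (enum S2) < size (enum (~: (b |: S1))).
  have := cardsC (b |: S1); rewrite cardsU1 bNS1 -cardE.
  have : index c (enum S2) < #|S2| by rewrite cardE index_mem mem_enum.
  lia.
rewrite nth_cat idx_lt.
by have := mem_nth b idx_lt; rewrite mem_enum !inE negb_or => /andP[].
Qed.

Definition induced (T : finType) (e : rel T) (A : {set T}) : rel {x : T | x \in A} :=
  fun x y => e (val x) (val y).
Arguments induced {T} e A.

Section InducedSubgraph.
Variables (T : finType) (e : rel T) (A : {set T}).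

Lemma planar_induced : planar e -> planar (induced e A).
Proof.
case=> [p [c [p_inj [arc cross]]]].
exists (fun x => p (val x)), (fun x y => c (val x) (val y)); split.
  by move=> x y /p_inj /val_inj.
split=> [x y xy|x y u v xy uv neq s t s01 t01 hit].
  have [? [? [? [? [? interior]]]]] := arc _ _ xy.
  by do 5 (split=> //); move=> z; apply: interior.
have neq' : ~ ((val x = val u /\ val y = val v) \/ (val x = val v /\ val y = val u)).
  by move=> eqs; apply: neq; case: eqs => -[/val_inj-> /val_inj->]; [left|right].
have [w hit_w] := cross _ _ _ _ xy uv neq' s t s01 t01 hit.
have [_ [_ [c0 [c1 [_ interior]]]]] := arc _ _ xy.
(* a vertex point is only hit by the arc at its endpoints *)
case: s01 => [[s_gt0|<-] [s_lt1|->]].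
- by case: (interior w s (conj s_gt0 s_lt1)).
- by exists y; rewrite c1.
- by exists x; rewrite c0.
- by exists y; rewrite c1.
Qed.

Lemma deg_induced (x : {x : T | x \in A}) : deg (induced e A) x <= deg e (val x).
Proof.
rewrite /deg -(card_imset _ val_inj); apply: subset_leq_card.
by apply/subsetP => z /imsetP[y]; rewrite !inE => xy ->.
Qed.

Lemma in_F_induced : in_F e -> in_F (induced e A).
Proof.
case=> [[e_sym e_irr] [e_planar e_deg]]; split; [split|split].
- by move=> x y; apply: e_sym.
- by move=> x; apply: e_irr.
- exact: planar_induced.
- by move=> x; apply: leq_trans (deg_induced x) (e_deg _).
Qed.

End InducedSubgraph.

Definition dist_le2 (T : finType) (e : rel T) (X : {set T}) (x y : T) : bool :=
  e x y || [exists z in X, e x z && e z y].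

Definition dist2_coloring_on (T : finType) (e : rel T) (X : {set T}) (k : nat)
    (f : T -> 'I_k) : Prop :=
  forall x y, x \in X -> y \in X -> x != y -> dist_le2 e X x y -> f x != f y.

Lemma dist_le2_setT (T : finType) (e : rel T) (x y : T) :
  dist_le2 e setT x y = e x y || [exists z, e x z && e z y].
Proof. by congr (_ || _); apply: eq_existsb => z; rewrite in_setT. Qed.

Lemma dist_le2_sym (T : finType) (e : rel T) (X : {set T}) :
  symmetric e -> symmetric (dist_le2 e X).
Proof.
move=> e_sym x y; rewrite /dist_le2 e_sym; congr (_ || _).
by apply: eq_existsb => z; rewrite (e_sym x z) (e_sym z y) [_ && e y z]andbC.
Qed.

Lemma dist2_coloring_on_of_induced (T : finType) (e : rel T) (X : {set T}) (k : nat) :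
  dist2_colorable (induced e X) k.+1 ->
  exists f : T -> 'I_k.+1, dist2_coloring_on e X f.
Proof.
case=> f f_col; exists (fun z => if insub z is Some z' then f z' else ord0).
move=> x y xX yX xy xy_near; rewrite (insubT (mem X) xX) (insubT (mem X) yX).
apply: f_col; first by apply: contra xy => /eqP/(congr1 val)/= ->.
case/orP: xy_near => [xy_e|/existsP[z /and3P[zX xz zy]]]; apply/orP; [by left|right].
by apply/existsP; exists (Sub z zX); apply/andP.
Qed.

Lemma dist2_colorable_card (T : finType) (e : rel T) (k : nat) :
  #|T| <= k -> dist2_colorable e k.
Proof.
move=> card_le; exists (fun x => widen_ord card_le (enum_rank x)) => x y xy _.
by apply: contra xy => /eqP/(congr1 val)/= /val_inj/enum_rank_inj ->.
Qed.

Lemma minimal_induced_colorable (T : finType) (e : rel T) (k : nat) (X : {set T}) :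
  in_F e ->
  (forall (T' : finType) (e' : rel T'),
      in_F e' -> ~ dist2_colorable e' k -> lex_le e e') ->
  #|X| < #|T| -> dist2_colorable (induced e X) k.
Proof.
move=> e_F e_min X_lt; apply: NNPP => X_uncol.
have card_X : #|{: {x : T | x \in X}}| = #|X| by rewrite card_sig; apply: eq_card.
by case: (e_min _ _ (in_F_induced X e_F) X_uncol); rewrite card_X; lia.
Qed.

Section CutVertexGluing.
Variables (T : finType) (e : rel T) (k : nat).
Hypotheses (e_sym : symmetric e) (e_irr : irreflexive e).
Variables (v : T) (C : {set T}).
Hypothesis vNC : v \notin C.
Hypothesis C_closed : forall u w, u \in C -> e u w -> w != v -> w \in C.
Hypothesis deg_v_lt : deg e v < k.

Lemma nbr_in_cut_side u w : u \in C -> e u w -> w \in v |: C.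
Proof.
by move=> uC uw; rewrite !inE; case: (eqVneq w v) => //= wv; apply: C_closed uw wv.
Qed.

Lemma nbr_out_cut_side u w : u \in C -> e u w -> w \notin C -> w = v.
Proof. by move=> uC uw wNC; apply/eqP; apply: contraNT wNC; exact: C_closed uC uw. Qed.

Lemma dist_le2_cut_side u w :
  u \in C -> dist_le2 e setT u w -> dist_le2 e (v |: C) u w.
Proof.
rewrite /dist_le2 => uC /orP[-> //|/existsP[z /and3P[_ uz zw]]].
by apply/orP; right; apply/existsP; exists z; rewrite (nbr_in_cut_side uC uz) uz zw.
Qed.

Lemma dist_le2_far_side u w :
  u \notin C -> w \notin C -> u != w -> dist_le2 e setT u w -> dist_le2 e (~: C) u w.
Proof.
rewrite /dist_le2 => uNC wNC uw /orP[-> //|/existsP[z /and3P[_ uz zw]]].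
apply/orP; right; apply/existsP; exists z; rewrite uz zw inE !andbT.
apply: contra _ uw => zC; rewrite e_sym in uz.
by rewrite (nbr_out_cut_side zC uz uNC) (nbr_out_cut_side zC zw wNC).
Qed.

Lemma dist_le2_across u w :
  u \in C -> w \notin C -> w != v -> dist_le2 e setT u w -> e v u && e v w.
Proof.
move=> uC wNC wv /orP[uw|/existsP[z /and3P[_ uz zw]]].
  by move: wNC; rewrite (C_closed uC uw wv).
have zv : z = v.
  move: (nbr_in_cut_side uC uz); rewrite !inE => /orP[/eqP //|zC].
  by move: wv; rewrite (nbr_out_cut_side zC zw wNC) eqxx.
by rewrite -zv e_sym uz zw.
Qed.

Lemma dist2_colorable_glue (F1 F2 : T -> 'I_k) :
  dist2_coloring_on e (v |: C) F1 -> dist2_coloring_on e (~: C) F2 ->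
  dist2_colorable e k.
Proof.
move=> F1_col F2_col.
set N1 := [set u in C | e v u]; set N2 := [set u in ~: C | e v u].
have card_lt : #|F1 @: N1| + #|F2 @: N2| < #|'I_k|.
  have N12_deg : #|N1 :|: N2| <= deg e v.
    by apply/subset_leq_card/subsetP => u; rewrite !inE -andb_orl => /andP[].
  have N12_disj : N1 :&: N2 = set0.
    by apply/setP => u; rewrite !inE; case: (u \in C); rewrite ?andbF.
  have := cardsUI N1 N2; rewrite N12_disj cards0 card_ord.
  have := leq_imset_card F1 N1; have := leq_imset_card F2 N2; lia.
have nbr_color_v (X : {set T}) F (u : T) : dist2_coloring_on e X F ->
    v \in X -> u \in X -> e v u -> F v != F u.
  move=> F_col vX uX vu; apply: F_col => //; last by rewrite /dist_le2 vu.
  by apply: contraTneq vu => <-; rewrite e_irr.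
have F2v_fresh : F2 v \notin F2 @: N2.
  apply/imsetP => -[u]; rewrite !inE => /andP[uNC vu]; apply/eqP.
  by apply: nbr_color_v F2_col _ _ vu; rewrite inE.
have F1v_fresh : F1 v \notin F1 @: N1.
  apply/imsetP => -[u]; rewrite inE => /andP[uC vu]; apply/eqP.
  by apply: nbr_color_v F1_col _ _ vu; rewrite !inE ?eqxx ?uC ?orbT.
have [g [g_inj g_v g_N2]] := exists_inj_avoiding F2v_fresh F1v_fresh card_lt.
pose col z := if z \in C then F1 z else g (F2 z).
have col_cut z : z \in v |: C -> col z = F1 z.
  by rewrite /col !inE => /orP[/eqP->|->]; rewrite ?(negbTE vNC).
exists col => u w uw; rewrite -dist_le2_setT => uw_near.
wlog uC_or_wNC : u w uw uw_near / (u \in C) || (w \notin C).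
  move=> gen; case: (boolP ((u \in C) || (w \notin C))) => [|/norP[uNC /negbNE wC]].
    exact: gen.
  by rewrite eq_sym; apply: gen; rewrite 1?eq_sym 1?dist_le2_sym ?wC.
case: (boolP (u \in C)) => [uC|uNC]; last first.
  have wNC : w \notin C by rewrite (negbTE uNC) in uC_or_wNC.
  rewrite /col (negbTE uNC) (negbTE wNC) (inj_eq g_inj).
  by apply: F2_col; rewrite ?inE ?dist_le2_far_side.
have uA : u \in v |: C by rewrite inE uC orbT.
case: (boolP (w \in v |: C)) => [wA|].
  by rewrite !col_cut //; apply: F1_col; rewrite ?dist_le2_cut_side.
rewrite !inE negb_or => /andP[wv wNC].
have /andP[vu vw] := dist_le2_across uC wNC wv uw_near.
rewrite /col uC (negbTE wNC).
by apply: contraNneq (g_N2 (F2 w) _) => [<-|]; apply: imset_f; rewrite !inE ?uC ?wNC.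
Qed.

End CutVertexGluing.

Definition delete_vertex (T : finType) (e : rel T) (v : T) : rel T :=
  [rel a b | [&& e a b, a != v & b != v]].

Lemma minimal_no_cut_vertex (T : finType) (e : rel T) (v x y : T) :
  in_F e -> ~ dist2_colorable e 12 ->
  (forall (T' : finType) (e' : rel T'),
      in_F e' -> ~ dist2_colorable e' 12 -> lex_le e e') ->
  x != v -> y != v -> connect (delete_vertex e v) x y.
Proof.
move=> e_F e_uncol e_min xv yv; apply/negPn/negP => xNy.
have [[e_sym e_irr] [_ e_deg]] := e_F.
set C := [set z | connect (delete_vertex e v) x z].
have vNC : v \notin C.
  rewrite inE; apply/negP => /(closed_connect _) xv_conn.
  have Cv_closed : closed (delete_vertex e v) [pred z | z != v].
    by move=> a b /and3P[_ av bv]; rewrite !inE av bv.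
  by move: (xv_conn _ Cv_closed); rewrite !inE xv eqxx.
have C_closed u w : u \in C -> e u w -> w != v -> w \in C.
  move=> uC uw wv; have uv : u != v by apply: contraNneq vNC => <-.
  move: uC; rewrite !inE => /connect_trans; apply; apply: connect1.
  by rewrite /delete_vertex /= uw uv.
have card_lt (X : {set T}) z : z \notin X -> #|X| < #|T|.
  move=> zNX; rewrite -cardsT; apply: proper_card; rewrite properT.
  by apply: contraNneq zNX => ->; rewrite inE.
have [F1 F1_col] : exists F1 : T -> 'I_12, dist2_coloring_on e (v |: C) F1.
  apply/dist2_coloring_on_of_induced/minimal_induced_colorable => //.
  by apply: (card_lt _ y); rewrite !inE negb_or yv.
have [F2 F2_col] : exists F2 : T -> 'I_12, dist2_coloring_on e (~: C) F2.
  apply/dist2_coloring_on_of_induced/minimal_induced_colorable => //.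
  by apply: (card_lt _ x); rewrite !inE negbK connect0.
apply: e_uncol; apply: (dist2_colorable_glue e_sym e_irr vNC C_closed) F1_col F2_col.
exact: leq_ltn_trans (e_deg v) _.
Qed.

Lemma connected_no_cut_vertex (T : finType) (e : rel T) :
  2 < #|T| -> (forall v x y, x != v -> y != v -> connect (delete_vertex e v) x y) ->
  connected_graph e.
Proof.
move=> card_gt2 no_cut x y; case: (eqVneq x y) => [-> //|xy].
have [v] : exists v, v \notin [set x; y].
  apply/existsP; apply: contraTT card_gt2; rewrite negb_exists -leqNgt => /forallP xy_full.
  apply: (@leq_trans #|[set x; y]|); last by rewrite cards2 xy.
  by rewrite -cardsT; apply/subset_leq_card/subsetP => z _; apply: negbNE (xy_full z).
rewrite !inE negb_or => /andP[xv yv].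
apply: connect_sub (no_cut v x y _ _); rewrite 1?eq_sym //.
by move=> a b /and3P[ab _ _]; apply: connect1.
Qed.

Theorem lemma1 (T : finType) (e : rel T) :
  in_F e -> ~ dist2_colorable e 12 ->
  (forall (T' : finType) (e' : rel T'),
      in_F e' -> ~ dist2_colorable e' 12 -> lex_le e e') ->
  two_connected e.
Proof.
move=> e_F e_uncol e_min.
have card_gt2 : 2 < #|T|.
  rewrite ltnNge; apply/negP => card_le.
  by apply/e_uncol/dist2_colorable_card/(leq_trans card_le).
have no_cut := minimal_no_cut_vertex e_F e_uncol e_min.
by split=> //; split=> //; apply: connected_no_cut_vertex.
Qed.
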